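(* Let $(\Sigma_+,\Sigma_-,N_1,N_2,N_3)$ be a solution of the Wainwright–Hsu system satisfying the constraint, with $N_1<0$, $N_2=N_3>0$ and $\Sigma_-=0$. Then $\lim_{\tau\to\infty}\Sigma_+=\frac12$, $\lim_{\tau\to\infty}N_1=0$, $\lim_{\tau\to\infty}N_2=\infty$ and $\lim_{\tau\to\infty}N_1N_2=-\frac14$.
   Context: Wainwright–Hsu system: for functions $N_1,N_2,N_3,\Sigma_+,\Sigma_-$ of $\tau\in\mathbb{R}$ (prime denotes $d/d\tau$), $N_1'=(q-4\Sigma_+)N_1$, $N_2'=(q+2\Sigma_++2\sqrt3\Sigma_-)N_2$, $N_3'=(q+2\Sigma_+-2\sqrt3\Sigma_-)N_3$, $\Sigma_+'=-(2-q)\Sigma_+-3S_+$, $\Sigma_-'=-(2-q)\Sigma_--3S_-$, where $q=2(\Sigma_+^2+\Sigma_-^2)$, $S_+=\frac12[(N_2-N_3)^2-N_1(2N_1-N_2-N_3)]$, $S_-=\frac{\sqrt3}{2}(N_3-N_2)(N_1-N_2-N_3)$, together with the constraint $\Sigma_+^2+\Sigma_-^2+\frac34[N_1^2+N_2^2+N_3^2-2(N_1N_2+N_2N_3+N_1N_3)]=1$. The set $\{N_2=N_3,\ \Sigma_-=0\}$ is invariant under the flow. *)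

From Stdlib Require Import Reals.
From Coquelicot Require Import Coquelicot.
Open Scope R_scope.

Definition WH_q (Sp Sm : R) : R := 2 * (Sp ^ 2 + Sm ^ 2).

Definition WH_Sp (n1 n2 n3 : R) : R :=
  / 2 * ((n2 - n3) ^ 2 - n1 * (2 * n1 - n2 - n3)).

Definition WH_Sm (n1 n2 n3 : R) : R :=
  sqrt 3 / 2 * (n3 - n2) * (n1 - n2 - n3).

Definition WH_solution (N1 N2 N3 Sp Sm : R -> R) : Prop :=
  forall t : R,
    is_derive N1 t ((WH_q (Sp t) (Sm t) - 4 * Sp t) * N1 t) /\
    is_derive N2 t ((WH_q (Sp t) (Sm t) + 2 * Sp t + 2 * sqrt 3 * Sm t) * N2 t) /\
    is_derive N3 t ((WH_q (Sp t) (Sm t) + 2 * Sp t - 2 * sqrt 3 * Sm t) * N3 t) /\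
    is_derive Sp t (- (2 - WH_q (Sp t) (Sm t)) * Sp t - 3 * WH_Sp (N1 t) (N2 t) (N3 t)) /\
    is_derive Sm t (- (2 - WH_q (Sp t) (Sm t)) * Sm t - 3 * WH_Sm (N1 t) (N2 t) (N3 t)) /\
    Sp t ^ 2 + Sm t ^ 2
      + 3 / 4 * (N1 t ^ 2 + N2 t ^ 2 + N3 t ^ 2
                 - 2 * (N1 t * N2 t + N2 t * N3 t + N1 t * N3 t)) = 1.

From Stdlib Require Import Reals Lra Psatz Classical.
From Coquelicot Require Import Coquelicot.
Open Scope R_scope.

(* With Sigma_- = 0 and N2 = N3 the system reduces to S = Sigma_+, m = N1 < 0,
   n = N2 > 0.  The function (S - 1/2)^3 e^(6t) / (- m n^2) is nondecreasing, so
   either S <= 1/2 for all times, or S > 1/2 from some time on.  In the first case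
   S is nondecreasing, which keeps 1 - S^2 away from 0, and the linear part
   -2 (1 - S^2) (S - 1/2) of S' pulls S up to 1/2 exponentially fast.  In the
   second case - m n is nondecreasing, which again keeps 1 - S^2 away from 0, while
   m decays like e^(-3t/2); an integrating factor shows that S - 1/2 decays too.
   Once S -> 1/2, m'/m -> -3/2 gives m -> 0, the constraint gives m n -> -1/4, and
   therefore n -> +oo. *)

Lemma nonincreasing_of_derive_nonpos (f df : R -> R) (T : R) :
  (forall t, is_derive f t (df t)) -> (forall t, T <= t -> df t <= 0) ->
  forall t, T <= t -> f t <= f T.
Proof.
  intros Hf Hdf t Ht.
  destruct (Req_dec t T) as [-> | HtT]; [lra |].
  destruct (MVT_gen f T t df) as (c & Hc & Hmvt).
  - intros x _; apply Hf.
  - intros x _; apply derivable_continuous_pt; exists (df x); apply is_derive_Reals, Hf.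
  - rewrite Rmin_left, Rmax_right in Hc by lra.
    assert (df c <= 0) by (apply Hdf; lra). nra.
Qed.

Lemma nondecreasing_of_derive_nonneg (f df : R -> R) (T : R) :
  (forall t, is_derive f t (df t)) -> (forall t, T <= t -> 0 <= df t) ->
  forall t, T <= t -> f T <= f t.
Proof.
  intros Hf Hdf t Ht.
  enough (- f t <= - f T) by lra.
  apply (nonincreasing_of_derive_nonpos (fun s => - f s) (fun s => - df s)); auto.
  - intros s; apply (is_derive_opp f s (df s)), Hf.
  - intros s Hs; specialize (Hdf s Hs); lra.
Qed.

Lemma exp_weighted_le_of_derive_le (f df : R -> R) (a b c T : R) :
  a < c -> 0 <= b -> (forall t, is_derive f t (df t)) ->
  (forall t, T <= t -> df t <= - a * f t + b * exp (- (c * t))) ->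
  forall t, T <= t ->
  f t * exp (a * t) <= f T * exp (a * T) + b / (c - a) * exp ((a - c) * T).
Proof.
  intros Hac Hb Hf Hdf.
  set (g := fun s => f s * exp (a * s) + b / (c - a) * exp ((a - c) * s)).
  assert (Hg : forall t, is_derive g t
      ((df t + a * f t) * exp (a * t) - b * exp ((a - c) * t))).
  { intros t. unfold g. auto_derive.
    - exists (df t); apply Hf.
    - replace (Derive (fun x => f x) t) with (df t) by (symmetry; apply is_derive_unique, Hf).
      field. lra. }
  intros t Ht.
  assert (Hexp : forall s, exp (- (c * s)) * exp (a * s) = exp ((a - c) * s)).
  { intros s; rewrite <- exp_plus; f_equal; ring. }
  assert (Hgt : g t <= g T).
  { apply (nonincreasing_of_derive_nonpos g _ T Hg); auto.
    intros s Hs. rewrite <- Hexp.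
    assert (0 < exp (a * s)) by apply exp_pos.
    specialize (Hdf s Hs). nra. }
  assert (0 <= b / (c - a) * exp ((a - c) * t)).
  { apply Rmult_le_pos; [apply Rdiv_le_0_compat; lra | apply Rlt_le, exp_pos]. }
  unfold g in Hgt. lra.
Qed.

Lemma exp_weighted_nonincreasing (f df : R -> R) (a T : R) :
  (forall t, is_derive f t (df t)) -> (forall t, T <= t -> df t <= - a * f t) ->
  forall t, T <= t -> f t * exp (a * t) <= f T * exp (a * T).
Proof.
  intros Hf Hdf t Ht.
  assert (H := exp_weighted_le_of_derive_le f df a 0 (a + 1) T
                 ltac:(lra) (Rle_refl 0) Hf).
  replace (0 / (a + 1 - a)) with 0 in H by (unfold Rdiv; ring).
  rewrite Rmult_0_l, Rplus_0_r in H.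
  apply H; auto.
  intros s Hs; rewrite Rmult_0_l, Rplus_0_r; auto.
Qed.

Lemma eventually_lt_of_exp_weighted_le (f : R -> R) (a K T : R) :
  0 < a -> (forall t, T <= t -> f t * exp (a * t) <= K) ->
  forall eps, 0 < eps -> Rbar_locally p_infty (fun t => f t < eps).
Proof.
  intros Ha Hf eps Heps.
  exists (Rmax T (Rabs K / (a * eps))); intros t Ht.
  assert (HT : T <= t) by (apply Rlt_le, Rle_lt_trans with (2 := Ht), Rmax_l).
  assert (HK : Rabs K / (a * eps) < t) by (apply Rle_lt_trans with (2 := Ht), Rmax_r).
  assert (Hat : Rabs K < eps * (a * t)).
  { apply Rmult_lt_compat_l with (r := a * eps) in HK; [| nra].
    replace (a * eps * (Rabs K / (a * eps))) with (Rabs K) in HK by (field; lra).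
    lra. }
  assert (0 <= Rabs K) by apply Rabs_pos.
  pose proof (exp_ineq1_le (a * t)).
  pose proof (Rle_abs K).
  specialize (Hf t HT).
  apply Rmult_lt_reg_r with (exp (a * t)); [apply exp_pos | nra].
Qed.

Lemma is_lim_p_infty_of_eventually_near (f : R -> R) (l : R) :
  (forall eps, 0 < eps -> Rbar_locally p_infty (fun t => l - eps < f t)) ->
  (forall eps, 0 < eps -> Rbar_locally p_infty (fun t => f t < l + eps)) ->
  is_lim f p_infty l.
Proof.
  intros Hlow Hup. apply is_lim_spec. intros [eps Heps].
  eapply filter_imp; [| apply filter_and; [apply (Hlow eps Heps) | apply (Hup eps Heps)]].
  intros t [H1 H2]. apply Rabs_def1; simpl; lra.
Qed.

Lemma is_derive_sub_const (f : R -> R) (c x v : R) :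
  is_derive f x v -> is_derive (fun t => f t - c) x v.
Proof.
  intros Hf. auto_derive.
  - exists v; exact Hf.
  - replace (Derive (fun t => f t) x) with v by (symmetry; apply is_derive_unique, Hf).
    ring.
Qed.

Lemma is_derive_value (f : R -> R) (x v w : R) :
  v = w -> is_derive f x v -> is_derive f x w.
Proof. intros <-; auto. Qed.

(* The locally rotationally symmetric case S = Sigma_+, m = N1, n = N2 = N3,
   Sigma_- = 0, with the constraint used to eliminate n from S'. *)
Record lrs_solution (S m n : R -> R) : Prop := {
  lrs_dm : forall t, is_derive m t ((2 * S t ^ 2 - 4 * S t) * m t);
  lrs_dn : forall t, is_derive n t ((2 * S t ^ 2 + 2 * S t) * n t);
  lrs_dS : forall t, is_derive S t ((1 - S t ^ 2) * (1 - 2 * S t) + 9 / 4 * m t ^ 2);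
  lrs_constraint : forall t, S t ^ 2 + 3 / 4 * m t ^ 2 - 3 * m t * n t = 1;
  lrs_m_neg : forall t, m t < 0;
  lrs_n_pos : forall t, 0 < n t }.

Lemma WH_lrs_reduction (N1 N2 N3 Sp Sm : R -> R) :
  WH_solution N1 N2 N3 Sp Sm ->
  (forall t, N1 t < 0) ->
  (forall t, N2 t = N3 t /\ 0 < N2 t) ->
  (forall t, Sm t = 0) ->
  lrs_solution Sp N1 N2.
Proof.
  intros Hsol HN1 HN23 HSm.
  assert (H : forall t,
    is_derive N1 t ((2 * Sp t ^ 2 - 4 * Sp t) * N1 t) /\
    is_derive N2 t ((2 * Sp t ^ 2 + 2 * Sp t) * N2 t) /\
    is_derive Sp t ((1 - Sp t ^ 2) * (1 - 2 * Sp t) + 9 / 4 * N1 t ^ 2) /\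
    Sp t ^ 2 + 3 / 4 * N1 t ^ 2 - 3 * N1 t * N2 t = 1).
  { intros t.
    destruct (Hsol t) as (D1 & D2 & _ & DSp & _ & C).
    destruct (HN23 t) as [E23 _].
    unfold WH_q, WH_Sp in *. rewrite <- E23, (HSm t) in *.
    assert (HC : Sp t ^ 2 + 3 / 4 * N1 t ^ 2 - 3 * N1 t * N2 t = 1) by lra.
    split; [| split; [| split]]; auto; (eapply is_derive_value; [| eassumption]); nra. }
  split; intros t; [apply H .. | apply HN1 | apply HN23].
Qed.

Section LRS.

Variables S m n : R -> R.
Hypothesis sol : lrs_solution S m n.

Let dS := lrs_dS S m n sol.
Let dm := lrs_dm S m n sol.
Let dn := lrs_dn S m n sol.
Let constraint := lrs_constraint S m n sol.
Let m_neg := lrs_m_neg S m n sol.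
Let n_pos := lrs_n_pos S m n sol.

Lemma lrs_S_sq_lt_1 t : S t ^ 2 < 1.
Proof. specialize (constraint t). specialize (m_neg t). specialize (n_pos t). nra. Qed.

Lemma lrs_neg_m_n_sq_pos t : 0 < - m t * n t ^ 2.
Proof. apply Rmult_lt_0_compat; [specialize (m_neg t); lra | apply pow_lt, n_pos]. Qed.

Let K t := (S t - 1 / 2) ^ 3 * exp (6 * t) / (- m t * n t ^ 2).

Lemma lrs_K_derive t :
  is_derive K t (27 / 4 * (S t - 1 / 2) ^ 2 * m t ^ 2 * exp (6 * t) / (- m t * n t ^ 2)).
Proof.
  pose proof (lrs_neg_m_n_sq_pos t).
  unfold K. auto_derive.
  - repeat split; [eexists; apply dS | eexists; apply dm | eexists; apply dn |].
    simpl in *; lra.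
  - replace (Derive (fun x => S x) t) with ((1 - S t ^ 2) * (1 - 2 * S t) + 9 / 4 * m t ^ 2)
      by (symmetry; apply is_derive_unique, dS).
    replace (Derive (fun x => m x) t) with ((2 * S t ^ 2 - 4 * S t) * m t)
      by (symmetry; apply is_derive_unique, dm).
    replace (Derive (fun x => n x) t) with ((2 * S t ^ 2 + 2 * S t) * n t)
      by (symmetry; apply is_derive_unique, dn).
    field. specialize (m_neg t); specialize (n_pos t); split; lra.
Qed.

Lemma lrs_K_pos_iff t : 0 < K t <-> 1 / 2 < S t.
Proof.
  assert (Hw : 0 < exp (6 * t) / (- m t * n t ^ 2))
    by (apply Rdiv_lt_0_compat; [apply exp_pos | apply lrs_neg_m_n_sq_pos]).
  replace (K t) with ((S t - 1 / 2) ^ 3 * (exp (6 * t) / (- m t * n t ^ 2)))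
    by (unfold K, Rdiv; ring).
  split; intros H.
  - destruct (Rlt_or_le (1 / 2) (S t)) as [| Hle]; auto.
    assert ((S t - 1 / 2) ^ 3 <= 0).
    { rewrite (pow_add _ 1 2); apply Rmult_le_0_r; [simpl; lra | apply pow2_ge_0]. }
    nra.
  - apply Rmult_lt_0_compat; auto. apply pow_lt. lra.
Qed.

Lemma lrs_S_le_half_or_eventually_gt_half :
  (forall t, S t <= 1 / 2) \/ exists T, forall t, T <= t -> 1 / 2 < S t.
Proof.
  destruct (classic (exists T, 1 / 2 < S T)) as [[T HT] | Hnone].
  - right; exists T; intros t Ht.
    apply lrs_K_pos_iff, Rlt_le_trans with (K T); [now apply lrs_K_pos_iff |].
    apply (nondecreasing_of_derive_nonneg K _ T lrs_K_derive); auto.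
    intros s _. apply Rdiv_le_0_compat.
    + pose proof (exp_pos (6 * s)). pose proof (pow2_ge_0 (S s - 1 / 2)).
      pose proof (pow2_ge_0 (m s)). apply Rmult_le_pos; [| lra]. nra.
    + apply lrs_neg_m_n_sq_pos.
  - left; intros t. apply Rnot_lt_le. intros Ht. apply Hnone. now exists t.
Qed.

Lemma lrs_eventually_half_sub_S_lt (eps : R) :
  (forall t, S t <= 1 / 2) -> 0 < eps ->
  Rbar_locally p_infty (fun t => - (S t - 1 / 2) < eps).
Proof.
  intros Hle Heps.
  assert (HS0 : forall t, 0 <= t -> S 0 <= S t).
  { apply (nondecreasing_of_derive_nonneg S _ 0 dS). intros t _.
    specialize (Hle t). pose proof (lrs_S_sq_lt_1 t). pose proof (pow2_ge_0 (m t)).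
    assert (0 <= (1 - S t ^ 2) * (1 - 2 * S t)) by (apply Rmult_le_pos; lra).
    lra. }
  set (d := 3 / 4 * (1 - S 0 ^ 2)).
  assert (Hd : 0 < d) by (pose proof (lrs_S_sq_lt_1 0); unfold d; lra).
  assert (Hgap : forall t, 0 <= t -> d <= 1 - S t ^ 2).
  { intros t Ht. specialize (HS0 t Ht). specialize (Hle t).
    pose proof (lrs_S_sq_lt_1 0). unfold d. destruct (Rle_or_lt 0 (S t)); nra. }
  eapply (eventually_lt_of_exp_weighted_le (fun t => - (S t - 1 / 2)) (2 * d) _ 0);
    [lra | | exact Heps].
  apply (exp_weighted_nonincreasing (fun t => - (S t - 1 / 2))
           (fun t => - ((1 - S t ^ 2) * (1 - 2 * S t) + 9 / 4 * m t ^ 2))).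
  - intros t. apply (is_derive_opp (fun t => S t - 1 / 2)), is_derive_sub_const, dS.
  - intros t Ht. specialize (Hgap t Ht). specialize (Hle t).
    pose proof (pow2_ge_0 (m t)). nra.
Qed.

Section EventuallyAboveHalf.

Variable T : R.
Hypothesis S_gt_half : forall t, T <= t -> 1 / 2 < S t.

Lemma lrs_mn_nonincreasing t : T <= t -> m t * n t <= m T * n T.
Proof.
  apply (nonincreasing_of_derive_nonpos (fun s => m s * n s)
           (fun s => (4 * S s ^ 2 - 2 * S s) * (m s * n s))).
  - intros s. auto_derive.
    + split; [exists ((2 * S s ^ 2 - 4 * S s) * m s); apply dm |].
      split; [exists ((2 * S s ^ 2 + 2 * S s) * n s); apply dn | auto].
    + replace (Derive (fun x => m x) s) with ((2 * S s ^ 2 - 4 * S s) * m s)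
        by (symmetry; apply is_derive_unique, dm).
      replace (Derive (fun x => n x) s) with ((2 * S s ^ 2 + 2 * S s) * n s)
        by (symmetry; apply is_derive_unique, dn).
      ring.
  - intros s Hs. specialize (S_gt_half s Hs). specialize (m_neg s). specialize (n_pos s).
    assert (0 < 4 * S s ^ 2 - 2 * S s) by nra.
    assert (m s * n s < 0) by nra. nra.
Qed.

Lemma lrs_m_sq_exp_bound t :
  T <= t -> m t ^ 2 <= (m T * exp (3 / 2 * T)) ^ 2 * exp (- (3 * t)).
Proof.
  intros Ht.
  assert (Hdecay : - m t * exp (3 / 2 * t) <= - m T * exp (3 / 2 * T)).
  { apply (exp_weighted_nonincreasing (fun s => - m s)
             (fun s => - ((2 * S s ^ 2 - 4 * S s) * m s))); auto.
    - intros s. apply (is_derive_opp m), dm.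
    - intros s Hs. specialize (S_gt_half s Hs). pose proof (lrs_S_sq_lt_1 s).
      specialize (m_neg s).
      assert (2 * S s ^ 2 - 4 * S s + 3 / 2 < 0) by nra. nra. }
  assert (Hexp : exp (3 / 2 * t) ^ 2 * exp (- (3 * t)) = 1).
  { simpl. rewrite Rmult_1_r, <- !exp_plus, <- exp_0. f_equal. lra. }
  pose proof (exp_pos (3 / 2 * t)). specialize (m_neg t).
  replace (m t ^ 2) with (m t ^ 2 * (exp (3 / 2 * t) ^ 2 * exp (- (3 * t))))
    by (rewrite Hexp; ring).
  replace (m t ^ 2 * (exp (3 / 2 * t) ^ 2 * exp (- (3 * t))))
    with ((- m t * exp (3 / 2 * t)) ^ 2 * exp (- (3 * t))) by ring.
  apply Rmult_le_compat_r; [apply Rlt_le, exp_pos |].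
  replace ((m T * exp (3 / 2 * T)) ^ 2) with ((- m T * exp (3 / 2 * T)) ^ 2) by ring.
  apply pow_incr. split; [nra | exact Hdecay].
Qed.

Lemma lrs_eventually_S_sub_half_lt (eps : R) :
  0 < eps -> Rbar_locally p_infty (fun t => S t - 1 / 2 < eps).
Proof.
  intros Heps.
  set (d := - 3 * (m T * n T)).
  set (C := (m T * exp (3 / 2 * T)) ^ 2).
  assert (Hgap : forall t, T <= t -> d <= 1 - S t ^ 2).
  { intros t Ht. pose proof (lrs_mn_nonincreasing t Ht).
    specialize (constraint t). pose proof (pow2_ge_0 (m t)). unfold d. nra. }
  assert (Hd : 0 < d) by (specialize (m_neg T); specialize (n_pos T); unfold d; nra).
  assert (Hd_small : 2 * d < 3).
  { specialize (Hgap T (Rle_refl T)). pose proof (S_gt_half T (Rle_refl T)). nra. }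
  eapply (eventually_lt_of_exp_weighted_le (fun t => S t - 1 / 2) (2 * d) _ T);
    [lra | | exact Heps].
  apply (exp_weighted_le_of_derive_le (fun t => S t - 1 / 2)
           (fun t => (1 - S t ^ 2) * (1 - 2 * S t) + 9 / 4 * m t ^ 2) (2 * d) (9 / 4 * C) 3).
  - exact Hd_small.
  - unfold C. pose proof (pow2_ge_0 (m T * exp (3 / 2 * T))). lra.
  - intros t. apply is_derive_sub_const, dS.
  - intros t Ht. specialize (Hgap t Ht).
    pose proof (lrs_m_sq_exp_bound t Ht) as Hm. fold C in Hm.
    pose proof (S_gt_half t Ht).
    assert (0 <= (1 - S t ^ 2 - d) * (S t - 1 / 2)) by (apply Rmult_le_pos; lra).
    nra.
Qed.

End EventuallyAboveHalf.

Lemma lrs_S_lim : is_lim S p_infty (1 / 2).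
Proof.
  apply is_lim_p_infty_of_eventually_near; intros eps Heps;
    destruct lrs_S_le_half_or_eventually_gt_half as [Hle | [T HT]].
  - eapply filter_imp; [| exact (lrs_eventually_half_sub_S_lt eps Hle Heps)].
    simpl; intros t Ht; lra.
  - exists T; intros t Ht. specialize (HT t ltac:(lra)). lra.
  - exists 0; intros t _. specialize (Hle t). lra.
  - eapply filter_imp; [| exact (lrs_eventually_S_sub_half_lt T HT eps Heps)].
    simpl; intros t Ht; lra.
Qed.

Lemma lrs_m_lim : is_lim m p_infty 0.
Proof.
  assert (HS := lrs_S_lim). apply is_lim_spec in HS.
  destruct (HS (mkposreal (1 / 4) ltac:(lra))) as [M HM]; simpl in HM.
  apply is_lim_p_infty_of_eventually_near; intros eps Heps.
  - apply filter_imp with (P := fun t => - m t < eps); [intros t Ht; lra |].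
    eapply (eventually_lt_of_exp_weighted_le (fun t => - m t) (1 / 2) _ (M + 1));
      [lra | | exact Heps].
    apply (exp_weighted_nonincreasing (fun s => - m s)
             (fun s => - ((2 * S s ^ 2 - 4 * S s) * m s))).
    + intros s. apply (is_derive_opp m), dm.
    + intros s Hs. specialize (HM s ltac:(lra)). apply Rabs_def2 in HM.
      specialize (m_neg s).
      assert (2 * S s ^ 2 - 4 * S s + 1 / 2 < 0) by nra. nra.
  - exists 0; intros t _. specialize (m_neg t). lra.
Qed.

Lemma lrs_mn_lim : is_lim (fun t => m t * n t) p_infty (- (1 / 4)).
Proof.
  pose proof (is_lim_mult _ _ _ _ _ lrs_S_lim lrs_S_lim I) as HS2.
  pose proof (is_lim_mult _ _ _ _ _ lrs_m_lim lrs_m_lim I) as Hm2.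
  pose proof (is_lim_plus _ _ _ _ _ _ HS2 (is_lim_scal_l _ (3 / 4) _ _ Hm2) eq_refl) as Hsum.
  pose proof (is_lim_minus _ _ _ _ _ _ Hsum (is_lim_const 1 p_infty) eq_refl) as Hdiff.
  pose proof (is_lim_scal_r _ (/ 3) _ _ Hdiff) as Hlim. simpl in Hlim.
  replace (- (1 / 4)) with ((1 / 2 * (1 / 2) + 3 / 4 * (0 * 0) + - 1) * / 3) by field.
  eapply is_lim_ext; [| exact Hlim].
  intros t. specialize (constraint t). simpl. lra.
Qed.

Lemma lrs_n_lim : is_lim n p_infty p_infty.
Proof.
  assert (Hinv : is_lim (fun t => / Rabs (m t)) p_infty p_infty).
  { eapply filterlim_comp; [| apply filterlim_Rinv_0_right].
    apply is_lim_Rabs_0; [exact lrs_m_lim |].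
    exists 0; intros t _; apply Rlt_not_eq, m_neg. }
  assert (Hpos : Rbar_lt 0 (Rbar_opp (- (1 / 4)))) by (simpl; lra).
  pose proof (is_lim_mult _ _ _ _ _ Hinv (is_lim_opp _ _ _ lrs_mn_lim)
                (Rbar_mult_correct' _ _ _ (is_Rbar_mult_p_infty_pos _ Hpos))) as Hlim.
  rewrite (is_Rbar_mult_unique _ _ _ (is_Rbar_mult_p_infty_pos _ Hpos)) in Hlim.
  eapply is_lim_ext; [| exact Hlim].
  intros t. specialize (m_neg t). specialize (n_pos t).
  cbv beta. rewrite Rabs_left by lra. field. lra.
Qed.

End LRS.

Theorem mainTheorem13 (N1 N2 N3 Sp Sm : R -> R) :
  WH_solution N1 N2 N3 Sp Sm ->
  (forall t, N1 t < 0) ->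
  (forall t, N2 t = N3 t /\ 0 < N2 t) ->
  (forall t, Sm t = 0) ->
  is_lim Sp p_infty (Finite (1 / 2)) /\
  is_lim N1 p_infty (Finite 0) /\
  is_lim N2 p_infty p_infty /\
  is_lim (fun t => N1 t * N2 t) p_infty (Finite (- (1 / 4))).
Proof.
  intros Hsol HN1 HN23 HSm.
  pose proof (WH_lrs_reduction _ _ _ _ _ Hsol HN1 HN23 HSm) as Hlrs.
  split; [| split; [| split]].
  - exact (lrs_S_lim _ _ _ Hlrs).
  - exact (lrs_m_lim _ _ _ Hlrs).
  - exact (lrs_n_lim _ _ _ Hlrs).
  - exact (lrs_mn_lim _ _ _ Hlrs).
Qed.
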